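(* For every integer $n\ge 3$ there exists a simple hamiltonian graph on $n$ vertices with maximum degree at most $3$, diameter at most $2\lfloor\log_2 n\rfloor$, and at most $\bigl\lfloor \tfrac{11n}{8}+\tfrac{3}{4}\bigr\rfloor$ edges.
   Context: A graph is hamiltonian if it contains a cycle passing through every vertex exactly once. The diameter of a graph is the maximum over pairs of vertices of their graph distance. *)

From mathcomp Require Import all_boot.
Set Implicit Arguments. Unset Strict Implicit. Unset Printing Implicit Defensive.

Definition simple_graph (T : finType) (e : rel T) : Prop :=
  symmetric e /\ irreflexive e.

Definition degree (T : finType) (e : rel T) (x : T) : nat := #|[set y | e x y]|.

(* number of edges: unordered pairs {x,y} with e x y, counted via an
   enumeration rank order to pick each pair once *)
Definition num_edges (T : finType) (e : rel T) : nat :=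
  #|[set p : T * T | (enum_rank p.1 < enum_rank p.2)%N && e p.1 p.2]|.

Definition hamiltonian (T : finType) (e : rel T) : Prop :=
  exists s : seq T, [/\ uniq s, size s = #|T| & cycle e s].

(* x and y are at graph distance at most d: there is a walk of length
   (number of edges) at most d from x to y *)
Definition dist_le (T : finType) (e : rel T) (d : nat) (x y : T) : Prop :=
  exists p : seq T, [/\ path e x p, last x p = y & (size p <= d)%N].

Definition diameter_le (T : finType) (e : rel T) (d : nat) : Prop :=
  forall x y : T, dist_le e d x y.

(* Label the vertices 0, ..., n-1 as a binary heap: the children of i are
   2i+1 and 2i+2, so every vertex lies at depth at most floor(log2 n) and the
   tree edges give the diameter bound.  A hamiltonian cycle is obtained from a
   traversal of the heap in which a vertex is listed either before both of its
   subtours or between the reversed tour of its left subtree and the tour of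
   its right subtree.  Choosing the shapes suitably, every tree edge is an
   edge of the cycle except the edge from a "start" vertex i > 0 to its right
   child, which is added as a chord.  Chorded vertices are right children of
   unchorded vertices, so each vertex meets at most one chord, and their labels
   are congruent to 0, 4 or 6 mod 8, so there are at most (3n+5)/8 chords. *)
From mathcomp Require Import all_boot zify.
Set Implicit Arguments. Unset Strict Implicit. Unset Printing Implicit Defensive.

Section Sequences.

Variable T : eqType.

Definition adjacent (s : seq T) (a b : T) : bool :=
  infix [:: a; b] s || infix [:: b; a] s.

Lemma adjacentC s a b : adjacent s a b = adjacent s b a.
Proof. exact: orbC. Qed.

Lemma adjacent_catl s t a b : adjacent s a b -> adjacent (t ++ s) a b.
Proof. by case/orP=> h; apply/orP; [left|right]; apply: infix_catl. Qed.

Lemma adjacent_catr s t a b : adjacent s a b -> adjacent (s ++ t) a b.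
Proof. by case/orP=> h; apply/orP; [left|right]; apply: infix_catr. Qed.

Lemma adjacent_rev s a b : adjacent s a b -> adjacent (rev s) a b.
Proof. by rewrite /adjacent -!infix_revLR orbC. Qed.

Lemma adjacent_mid s t a b : adjacent (s ++ a :: b :: t) a b.
Proof. by rewrite /adjacent (infix_infix s [:: a; b] t). Qed.

Lemma next_infix (s : seq T) a b : uniq s -> infix [:: a; b] s -> next s a = b.
Proof.
move=> s_uniq /infixP[s1 [s2 def_s]].
by rewrite -(next_rot (size s1) s_uniq) def_s rot_size_cat /= eqxx.
Qed.

Lemma next_neq (s : seq T) x : uniq s -> 1 < size s -> x \in s -> next s x != x.
Proof.
move=> s_uniq s_gt1 /rot_to[i s' def_s]; rewrite -(next_rot i s_uniq) def_s.
have : uniq (x :: s') by rewrite -def_s rot_uniq.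
have : 1 < size (x :: s') by rewrite -def_s size_rot.
by case: s' {def_s} => [|y s'] //= _; rewrite eqxx inE negb_or eq_sym => /andP[/andP[]].
Qed.

End Sequences.

Section Distance.

Variables (T : finType) (e : rel T).

Lemma dist_le_refl x : dist_le e 0 x x.
Proof. by exists [::]. Qed.

Lemma dist_le_cons d x y z : e x y -> dist_le e d y z -> dist_le e d.+1 x z.
Proof. by move=> exy [p [p_path p_last p_size]]; exists (y :: p); rewrite /= exy. Qed.

Lemma dist_le_trans d1 d2 x y z :
  dist_le e d1 x y -> dist_le e d2 y z -> dist_le e (d1 + d2) x z.
Proof.
move=> [p [p_path p_last p_size]] [q [q_path q_last q_size]].
exists (p ++ q); rewrite cat_path last_cat p_last p_path q_path q_last size_cat.
by split=> //; apply: leq_add.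
Qed.

Lemma dist_le_sym d x y : symmetric e -> dist_le e d x y -> dist_le e d y x.
Proof.
move=> e_sym [p [p_path <- p_size]]; exists (rev (belast x p)); split.
- by rewrite rev_path (eq_path (e' := e)) // => a b; exact: e_sym.
- by case: p {p_path p_size} => //= z p; rewrite rev_cons last_rcons.
- by rewrite size_rev size_belast.
Qed.

Lemma dist_le_mono d d' x y : d <= d' -> dist_le e d x y -> dist_le e d' x y.
Proof.
by move=> le_dd' [p [p_path p_last p_size]]; exists p; split=> //; apply: leq_trans le_dd'.
Qed.

End Distance.

Definition parent (x : nat) : nat := x.-1./2.

Lemma parent_le x : parent x <= x.
Proof. rewrite /parent; lia. Qed.

Lemma parent_lt x : 0 < x -> parent x < x.
Proof. rewrite /parent; lia. Qed.

Lemma parent_child_left i : parent i.*2.+1 = i.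
Proof. rewrite /parent; lia. Qed.

Lemma parent_child_right i : parent i.*2.+2 = i.
Proof. rewrite /parent; lia. Qed.

Lemma trunc_log2_parent x : 0 < x -> trunc_log 2 x.+1 = (trunc_log 2 (parent x).+1).+1.
Proof.
by move=> x_gt0; rewrite trunc_log2S; [congr (trunc_log _ _).+1; rewrite /parent|]; lia.
Qed.

(* In heap terms: no vertex descends from two distinct siblings. *)
Lemma divn_exp2_half_inj x m m' a b :
  x %/ 2 ^ m = a -> x %/ 2 ^ m' = b -> 0 < a./2 -> a./2 = b./2 -> a = b.
Proof.
wlog le_mm' : m m' a b / m <= m'.
  move=> W ha hb; case: (leqP m m') => [le | /ltnW le]; first exact: (W m m').
  by move=> ? hab; symmetry; apply: (W m' m) => //; lia.
move=> ha; rewrite -(subnKC le_mm') expnD divnMA ha.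
case: (posnP (m' - m)) => [-> | d_gt0]; first by rewrite divn1.
have : a %/ 2 ^ (m' - m) <= a./2.
  by rewrite -divn2 leq_div2l // -{1}(expn1 2) leq_exp2l.
lia.
Qed.

(* [k] is fuel; [chorded_rec x x] suffices since [parent] decreases. *)
Fixpoint chorded_rec (k x : nat) : bool :=
  if k is k'.+1 then [&& ~~ odd x, 0 < parent x & ~~ chorded_rec k' (parent x)]
  else false.

Definition chorded (x : nat) : bool := chorded_rec x x.

Lemma chorded_rec_enough k l x : x <= k -> x <= l -> chorded_rec k x = chorded_rec l x.
Proof.
elim: k l x => [|k IHk] [|l] x //=; rewrite ?leqn0 => xk xl.
- by rewrite (eqP xk).
- by rewrite (eqP xl).
case: (posnP x) => [-> //| x_gt0]; have px := parent_lt x_gt0.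
by rewrite (IHk l); lia.
Qed.

Lemma chordedE x : chorded x = [&& ~~ odd x, 0 < parent x & ~~ chorded (parent x)].
Proof.
rewrite /chorded; case: x => //= x.
by rewrite (@chorded_rec_enough x (parent x.+1)) // -ltnS parent_lt.
Qed.

Lemma chorded_child_left i : chorded i.*2.+1 = false.
Proof. by rewrite chordedE /= odd_double. Qed.

Lemma chorded_child_right i : chorded i.*2.+2 = (0 < i) && ~~ chorded i.
Proof. by rewrite chordedE parent_child_right /= odd_double. Qed.

Lemma chorded_parent x : chorded x -> x = (parent x).*2.+2.
Proof. rewrite chordedE /parent => /and3P[]; lia. Qed.

Lemma chorded_gt0 x : chorded x -> 0 < x.
Proof. by move/chorded_parent->. Qed.

Fixpoint tour (n k i : nat) : seq nat :=
  if k is k'.+1 then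
    if i < n then
      if chorded i.*2.+2 then i :: tour n k' i.*2.+1 ++ tour n k' i.*2.+2
      else rev (tour n k' i.*2.+1) ++ i :: tour n k' i.*2.+2
    else [::]
  else [::].

Definition heap_tour (n : nat) : seq nat := tour n n 0.

Section Tour.

Variable n : nat.

Lemma perm_tourS k i :
  perm_eq (tour n k.+1 i)
          (if i < n then i :: tour n k i.*2.+1 ++ tour n k i.*2.+2 else [::]).
Proof.
rewrite /=; case: (i < n) => //; case: (chorded _) => //.
by rewrite -cat1s perm_catCA /= perm_cons perm_cat2r perm_rev.
Qed.

Lemma mem_tourS k i x :
  (x \in tour n k.+1 i) =
  (i < n) && [|| x == i, x \in tour n k i.*2.+1 | x \in tour n k i.*2.+2].
Proof. by rewrite (perm_mem (perm_tourS k i)); case: (i < n); rewrite ?inE ?mem_cat. Qed.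

Lemma tour_lt k i x : x \in tour n k i -> x < n.
Proof.
elim: k i => [|k IHk] i //; rewrite mem_tourS => /andP[i_lt].
by case/or3P=> [/eqP-> //|/IHk|/IHk].
Qed.

Lemma tour_descendant k i x : x \in tour n k i -> exists m, x.+1 %/ 2 ^ m = i.+1.
Proof.
elim: k i => [|k IHk] i //; rewrite mem_tourS => /andP[_].
case/or3P=> [/eqP->|/IHk[m hm]|/IHk[m hm]]; first by exists 0; rewrite divn1.
all: by exists m.+1; rewrite expnSr divnMA hm divn2; lia.
Qed.

Lemma tour_uniq k i : uniq (tour n k i).
Proof.
elim: k i => [|k IHk] i //; rewrite (perm_uniq (perm_tourS k i)).
case: (i < n) => //; rewrite /= cat_uniq !IHk mem_cat andbT /=.
apply/andP; split.
- apply/norP; split; apply/negP=> /tour_descendant[m];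
    have := leq_div i.+1 (2 ^ m); lia.
- apply/hasPn=> x /tour_descendant[m hm]; apply/negP=> /tour_descendant[m' hm'].
  have := divn_exp2_half_inj hm hm'; lia.
Qed.

Lemma tour_cover k i m x :
  x < n -> x.+1 %/ 2 ^ m = i.+1 -> m < k -> x \in tour n k i.
Proof.
elim: k i m => [|k IHk] i m // x_lt hm m_lt; rewrite mem_tourS.
have i_lt : i < n by have := leq_div x.+1 (2 ^ m); lia.
rewrite i_lt; case: m hm m_lt => [|m] hm m_lt.
  by rewrite divn1 in hm; rewrite (succn_inj hm) eqxx.
rewrite expnSr divnMA divn2 in hm.
have [c hc] : exists c, x.+1 %/ 2 ^ m = c.+1 by exists (x.+1 %/ 2 ^ m).-1; lia.
have := IHk c m x_lt hc m_lt.
rewrite hc in hm; have [->|->] : c = i.*2.+1 \/ c = i.*2.+2 by lia.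
all: by move->; rewrite !orbT.
Qed.

Lemma mem_heap_tour x : (x \in heap_tour n) = (x < n).
Proof.
apply/idP/idP; first exact: tour_lt.
move=> x_lt; have /andP[lo hi] := @trunc_log_bounds 2 x.+1 (erefl _) (erefl _).
apply: (@tour_cover _ _ (trunc_log 2 x.+1)) => //.
- apply/eqP; rewrite eqn_leq -ltnS ltn_divLR ?leq_divRL ?expn_gt0 //.
  by rewrite mul1n -expnS hi lo.
- exact: leq_trans (ltn_expl _ (ltnSn 1)) (leq_trans lo x_lt).
Qed.

Lemma tour_head k i x :
  chorded i.*2.+2 -> x \in tour n k i -> tour n k i = i :: behead (tour n k i).
Proof. by case: k => // k /= ->; case: (i < n). Qed.

Lemma tour_adjacent k i x :
  x \in tour n k i -> x != i -> ~~ chorded x -> adjacent (tour n k i) x (parent x).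
Proof.
elim: k i => [|k IHk] i //=; case: ltnP => // _.
have start_l : chorded i.*2.+1.*2.+2 by rewrite chorded_child_right chorded_child_left.
case: ifP => ch_r.
- rewrite inE mem_cat => /orP[/eqP-> | /orP[xl | xr]]; rewrite ?eqxx // => _ ch_x.
  + have [-> | ne] := eqVneq x i.*2.+1.
      rewrite (tour_head start_l xl) parent_child_left adjacentC.
      exact: (adjacent_mid [::]).
    by rewrite -cat1s; apply/adjacent_catl/adjacent_catr/IHk.
  + have [ex | ne] := eqVneq x i.*2.+2; first by rewrite ex ch_r in ch_x.
    by rewrite -cat1s catA; apply/adjacent_catl/IHk.
- have start_r : chorded i.*2.+2.*2.+2 by rewrite chorded_child_right ch_r.
  rewrite mem_cat mem_rev inE => /orP[xl | /orP[/eqP-> | xr]]; rewrite ?eqxx // => _ ch_x.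
  + have [-> | ne] := eqVneq x i.*2.+1.
      rewrite (tour_head start_l xl) rev_cons -cats1 -catA parent_child_left.
      exact: adjacent_mid.
    by apply/adjacent_catr/adjacent_rev/IHk.
  + have [-> | ne] := eqVneq x i.*2.+2.
      rewrite (tour_head start_r xr) parent_child_right adjacentC.
      exact: adjacent_mid.
    by rewrite -cat1s catA; apply/adjacent_catl/IHk.
Qed.

Lemma heap_tour_adjacent x :
  x < n -> 0 < x -> ~~ chorded x -> adjacent (heap_tour n) x (parent x).
Proof. by rewrite -mem_heap_tour => xT /lt0n_neq0; apply: tour_adjacent. Qed.

End Tour.

Section HeapGraph.

Variable n : nat.

Definition heap_cycle : seq 'I_n := pmap insub (heap_tour n).

Lemma map_val_heap_cycle : map val heap_cycle = heap_tour n.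
Proof.
rewrite (pmap_filter (@insubK _ _ _)) (eq_filter (@isSome_insub _ _ _)).
by apply/all_filterP/allP=> x; rewrite mem_heap_tour.
Qed.

Lemma heap_cycle_uniq : uniq heap_cycle.
Proof. exact/pmap_sub_uniq/tour_uniq. Qed.

Lemma mem_heap_cycle x : x \in heap_cycle.
Proof. by rewrite mem_pmap_sub mem_heap_tour ltn_ord. Qed.

Lemma size_heap_cycle : size heap_cycle = n.
Proof.
rewrite -(card_uniqP heap_cycle_uniq) -[RHS]card_ord.
by apply: eq_card=> x; rewrite mem_heap_cycle.
Qed.

Lemma next_heap_cycle (a b : 'I_n) :
  infix [:: val a; val b] (heap_tour n) -> next heap_cycle a = b.
Proof.
have val_uniq : uniq (map val heap_cycle).
  by rewrite (map_inj_uniq val_inj) heap_cycle_uniq.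
rewrite -map_val_heap_cycle => /(next_infix val_uniq).
by rewrite (next_map val_inj heap_cycle_uniq) => /val_inj.
Qed.

Definition chord (x y : 'I_n) : bool := chorded y && (val x == parent y).

Definition heap_graph : rel 'I_n := fun x y =>
  [|| next heap_cycle x == y, next heap_cycle y == x, chord x y | chord y x].

Lemma heap_graph_sym : symmetric heap_graph.
Proof. by move=> x y; rewrite /heap_graph orbCA (orbC (chord x y)). Qed.

Lemma heap_graph_irr : 1 < n -> irreflexive heap_graph.
Proof.
move=> n_gt1 x; rewrite /heap_graph orbA !orbb.
have -> : chord x x = false.
  by apply/andP=> -[/chorded_gt0/parent_lt + /eqP ex]; rewrite -ex ltnn.
rewrite orbF; apply/negbTE/next_neq;
  by rewrite ?heap_cycle_uniq ?size_heap_cycle ?mem_heap_cycle.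
Qed.

Lemma heap_graph_hamiltonian : hamiltonian heap_graph.
Proof.
exists heap_cycle; split; rewrite ?heap_cycle_uniq ?size_heap_cycle ?card_ord //.
by apply: (cycle_from_next heap_cycle_uniq) => x _; rewrite /heap_graph eqxx.
Qed.

Lemma chord_partner (x y : 'I_n) :
  chord x y || chord y x -> val y = if chorded x then parent x else x.*2.+2.
Proof.
case/orP=> /andP[ch /eqP ->]; last by rewrite ch.
by move: (ch); rewrite chordedE => /and3P[_ _ /negbTE->]; apply: chorded_parent.
Qed.

Lemma heap_graph_degree x : degree heap_graph x <= 3.
Proof.
pose C := [set y | chord x y || chord y x].
have C_le1 : #|C| <= 1.
  apply/card_le1_eqP=> y z; rewrite !inE => /chord_partner yx /chord_partner zx.
  by apply: val_inj; rewrite yx zx.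
rewrite /degree (@leq_trans #|[set next heap_cycle x; prev heap_cycle x] :|: C|) //.
  apply/subset_leq_card/subsetP=> y; rewrite !inE /heap_graph.
  case/or4P=> [/eqP-> | /eqP <- | cxy | cyx]; rewrite ?eqxx ?cxy ?cyx ?orbT //.
  by rewrite (prev_next heap_cycle_uniq) eqxx orbT.
by rewrite (leq_trans (leq_card_setU _ _)) // cards2 -(addn1 2) leq_add // ltnS leq_b1.
Qed.

Definition ord_parent (x : 'I_n) : 'I_n :=
  Ordinal (leq_ltn_trans (parent_le x) (ltn_ord x)).

Lemma heap_graph_parent x : 0 < val x -> heap_graph x (ord_parent x).
Proof.
move=> x_gt0; case ch: (chorded x).
  by rewrite /heap_graph /chord ch eqxx !orbT.
case/orP: (heap_tour_adjacent (ltn_ord x) x_gt0 (negbT ch)).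
- by move/(@next_heap_cycle x (ord_parent x)); rewrite /heap_graph => ->; rewrite eqxx.
- by move/(@next_heap_cycle (ord_parent x) x); rewrite /heap_graph => ->; rewrite eqxx orbT.
Qed.

Lemma dist_le_root (r x : 'I_n) :
  val r = 0 -> dist_le heap_graph (trunc_log 2 (val x).+1) x r.
Proof.
move=> r0; have [k] := ubnP (val x); elim: k x => [|k IHk] x // x_lt.
have [x0 | x_gt0] := posnP (val x).
  have -> : x = r by apply: val_inj; rewrite x0 r0.
  by rewrite r0 trunc_log1; apply: dist_le_refl.
rewrite trunc_log2_parent //; apply: dist_le_cons (heap_graph_parent x_gt0) _.
by apply: IHk; exact: leq_trans (parent_lt x_gt0) x_lt.
Qed.

Lemma heap_graph_diameter : diameter_le heap_graph (2 * trunc_log 2 n).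
Proof.
move=> x y; pose r : 'I_n := Ordinal (leq_ltn_trans (leq0n x) (ltn_ord x)).
have r0 : val r = 0 by [].
have depth_le (z : 'I_n) : trunc_log 2 (val z).+1 <= trunc_log 2 n.
  exact/leq_trunc_log/ltn_ord.
have := dist_le_trans (dist_le_root x r0) (dist_le_sym heap_graph_sym (dist_le_root y r0)).
by apply: dist_le_mono; rewrite mul2n -addnn leq_add.
Qed.

Lemma num_edges_le_chorded : num_edges heap_graph <= n + #|[set y : 'I_n | chorded y]|.
Proof.
pose cycle_edge (x : 'I_n) := let y := next heap_cycle x in
  if enum_rank x < enum_rank y then (x, y) else (y, x).
pose chord_edge (y : 'I_n) := (ord_parent y, y).
rewrite /num_edges (@leq_trans
  #|cycle_edge @: [set: 'I_n] :|: chord_edge @: [set y : 'I_n | chorded y]|) //.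
  apply/subset_leq_card/subsetP=> -[a b]; rewrite !inE /= => /andP[lt_ab].
  have lt_val : val a < val b by move: lt_ab; rewrite !enum_rank_ord.
  case/or4P=> [/eqP ab | /eqP ba | /andP[ch /eqP ab] | /andP[ch /eqP ba]].
  - by apply/orP; left; apply/imsetP; exists a; rewrite ?inE // /cycle_edge ab lt_ab.
  - apply/orP; left; apply/imsetP; exists b; rewrite ?inE //.
    by rewrite /cycle_edge ba ltnNge (ltnW lt_ab).
  - apply/orP; right; apply/imsetP; exists b; rewrite ?inE //.
    by congr pair; apply: val_inj.
  - by have := parent_lt (chorded_gt0 ch); rewrite -ba ltnNge (ltnW lt_val).
rewrite (leq_trans (leq_card_setU _ _)) // leq_add //.
  by rewrite (leq_trans (leq_imset_card _ _)) // cardsT card_ord.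
exact: leq_imset_card.
Qed.

End HeapGraph.

Definition mod8_in046 (x : nat) : bool := x %% 8 \in [:: 0; 4; 6].

Lemma chorded_mod8 x : chorded x -> mod8_in046 x.
Proof.
move=> ch; have := chorded_parent ch; move: ch.
rewrite chordedE => /and3P[_ p_gt0]; rewrite chordedE !negb_and !negbK.
case/or3P=> [| | /chorded_parent]; rewrite /mod8_in046 !inE /parent in p_gt0 * => *; lia.
Qed.

Lemma count_mod8_in046 n : 8 * count mod8_in046 (iota 0 n) <= 3 * n + 5.
Proof.
elim/ltn_ind: n => n IHn; case: (ltnP n 8) => [|le8n].
  by case: n {IHn} => [|[|[|[|[|[|[|[|]]]]]]]].
rewrite -(subnKC le8n) iotaD count_cat [0 + 8]addnC iotaDl count_map.
have -> : count (preim (addn 8) mod8_in046) (iota 0 (n - 8)) =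
          count mod8_in046 (iota 0 (n - 8)).
  by apply: eq_count => x; rewrite /= /mod8_in046 modnDl.
by have := IHn (n - 8); rewrite /=; lia.
Qed.

Lemma card_ord_count n (P : pred nat) : #|[set y : 'I_n | P y]| = count P (iota 0 n).
Proof. by rewrite cardsE cardE /enum_mem size_filter -val_enum_ord count_map -enumT. Qed.

Lemma heap_graph_num_edges n : num_edges (@heap_graph n) <= (11 * n + 6) %/ 8.
Proof.
apply: leq_trans (num_edges_le_chorded n) _; rewrite leq_divRL // card_ord_count.
have := count_mod8_in046 n; have := sub_count chorded_mod8 (iota 0 n); lia.
Qed.

Theorem mainTheorem6 (n : nat) (hn : (3 <= n)%N) :
  exists e : rel 'I_n,
    [/\ simple_graph e,
        hamiltonian e,
        (forall x : 'I_n, (degree e x <= 3)%N),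
        diameter_le e (2 * trunc_log 2 n) &
        (num_edges e <= (11 * n + 6) %/ 8)%N].
Proof.
exists (@heap_graph n); split.
- by split; [exact: heap_graph_sym | apply: heap_graph_irr; lia].
- exact: heap_graph_hamiltonian.
- exact: heap_graph_degree.
- exact: heap_graph_diameter.
- exact: heap_graph_num_edges.
Qed.
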